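(* For every instance (strip $T=[0,w]\times[0,h]$ with $1<w\le 2$, $h>1$, and reals $\frac12\le y_1<\dots<y_n\le h-\frac12$), there is a staircase layout with positive gap.
   Context: A layout is a pair $(\mathbf x,\prec)$ where $\mathbf x=(x_1,\dots,x_n)$ with $x_i\in[\frac12,w-\frac12]$, and $\prec$ is a total order (stacking order) on the squares $s_1,\dots,s_n$, where $s_i$ is the closed axis-parallel unit square with centre $(x_i,y_i)$. If $s_i\prec s_j$ we say $s_j$ is in front of $s_i$ and $s_i$ is behind $s_j$. A point $p$ on the boundary of $s_i$ is visible if every square $s_j$ ($j\neq i$) containing $p$ is behind $s_i$. The visible perimeter of $s_i$ is the total length of its visible boundary points; the gap of $s_i$ is its visible perimeter minus $2$, and the gap of a layout is the minimum of the gaps of its squares. A staircase is a layout in which $x_1\le x_2\le\dots\le x_n$ or $x_1\ge x_2\ge\dots\ge x_n$, and in which $s_1\prec s_2\prec\dots\prec s_n$ or $s_1\succ s_2\succ\dots\succ s_n$. *)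

From HB Require Import structures.
From mathcomp Require Import all_boot all_order all_algebra perm.
From mathcomp Require Import all_classical all_reals all_analysis.
Set Implicit Arguments. Unset Strict Implicit. Unset Printing Implicit Defensive.
Import Order.TTheory GRing.Theory Num.Theory.
Local Open Scope classical_set_scope.
Local Open Scope ring_scope.

(* Squares are indexed by 'I_n (s_1..s_n ~ indices 0..n-1).
   A layout is (x, sigma): x i is the abscissa of the centre of s_i and the
   stacking order is  s_i < s_j  iff  sigma i < sigma j  (a total order). *)

Definition in_square (R : realType) (c p : R * R) : Prop :=
  `|p.1 - c.1| <= 2^-1 /\ `|p.2 - c.2| <= 2^-1.

Definition behind n (sigma : {perm 'I_n}) (j i : 'I_n) : bool :=
  (sigma j < sigma i)%N.

Definition visible (R : realType) n (x y : 'I_n -> R) (sigma : {perm 'I_n})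
  (i : 'I_n) (p : R * R) : Prop :=
  forall j : 'I_n, j != i -> in_square (x j, y j) p -> behind sigma j i.

Definition side_pt (R : realType) (c : R * R) (k : nat) (t : R) : R * R :=
  match k with
  | 0%N => (c.1 - 2^-1 + t, c.2 - 2^-1)
  | 1%N => (c.1 + 2^-1, c.2 - 2^-1 + t)
  | 2%N => (c.1 - 2^-1 + t, c.2 + 2^-1)
  | _ => (c.1 - 2^-1, c.2 - 2^-1 + t)
  end.

(* visible perimeter of s_i: total length (Lebesgue measure) of the visible
   boundary points, computed side by side (corners are null sets). *)
Definition visible_perimeter (R : realType) n (x y : 'I_n -> R)
  (sigma : {perm 'I_n}) (i : 'I_n) : \bar R :=
  (\sum_(k < 4)
     (@lebesgue_measure R)
       [set t : R | (0 <= t <= 1)%R /\ visible x y sigma i (side_pt (x i, y i) k t)])%E.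

Definition sq_gap (R : realType) n (x y : 'I_n -> R) (sigma : {perm 'I_n})
  (i : 'I_n) : \bar R :=
  (visible_perimeter x y sigma i - 2%:E)%E.

Definition layout_gap (R : realType) n (x y : 'I_n -> R) (sigma : {perm 'I_n})
  : \bar R :=
  \big[Order.min/+oo%E]_(i < n) sq_gap x y sigma i.

Definition is_layout (R : realType) n (w : R) (x : 'I_n -> R) : Prop :=
  forall i, 2^-1 <= x i <= w - 2^-1.

Definition staircase (R : realType) n (x : 'I_n -> R) (sigma : {perm 'I_n})
  : Prop :=
  ((forall i j : 'I_n, (i <= j)%N -> x i <= x j) \/
   (forall i j : 'I_n, (i <= j)%N -> x j <= x i)) /\
  ((forall i j : 'I_n, (i < j)%N -> behind sigma i j) \/
   (forall i j : 'I_n, (i < j)%N -> behind sigma j i)).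

(* Put the centres at x_i = 1/2 + d i with d = (w - 1)/(n + 1) and stack the
   squares s_1 < s_2 < ... < s_n.  Every square in front of s_i lies
   strictly higher and strictly further right, so the bottom and left sides of
   s_i are entirely visible, and so is the initial segment of length d of its
   top side: the visible perimeter of s_i is at least 2 + d/2. *)

From HB Require Import structures.
From mathcomp Require Import all_boot all_order all_algebra perm.
From mathcomp Require Import all_classical all_reals all_analysis.
From mathcomp Require Import lra.

Set Implicit Arguments.
Unset Strict Implicit.
Unset Printing Implicit Defensive.
Import Order.TTheory GRing.Theory Num.Theory.
Local Open Scope ring_scope.
Local Open Scope classical_set_scope.

Lemma lebesgue_measure_ge_itv (R : realType) (A : set R) (a b : R) :
  a <= b -> `[a, b] `<=` A -> ((b - a)%:E <= lebesgue_measure A)%E.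
Proof.
rewrite le_eqVlt => /orP[/eqP-> _|ab abA]; first by rewrite subrr measure_ge0.
have -> : (b - a)%:E = lebesgue_measure `[a, b].
  by rewrite lebesgue_measure_itv /= lte_fin ab -EFinB.
exact: le_outer_measure.
Qed.

Lemma visible_perm1 (R : realType) n (x y : 'I_n -> R) (i : 'I_n) p :
  (forall j : 'I_n, (i < j)%N -> ~ in_square (x j, y j) p) ->
  visible x y 1 i p.
Proof.
move=> in_front j ji jp; rewrite /behind !perm1 ltn_neqAle ji andTb.
by rewrite leqNgt; apply/negP => /in_front.
Qed.

Lemma staircase_perm1 (R : realType) n (x : 'I_n -> R) :
  (forall i j : 'I_n, (i <= j)%N -> x i <= x j) -> staircase x 1.
Proof. by move=> x_incr; split; left => // i j ij; rewrite /behind !perm1. Qed.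

Section IncreasingStaircase.

Variables (R : realType) (n : nat) (x y : 'I_n -> R) (d : R).
Hypothesis y_incr : forall i j : 'I_n, (i < j)%N -> y i < y j.
Hypothesis x_spread : forall i j : 'I_n, (i < j)%N -> x i + d <= x j.
Hypotheses (d_gt0 : 0 < d) (d_le1 : d <= 1).

Lemma bottom_side_visible i t : visible x y 1 i (side_pt (x i, y i) 0 t).
Proof.
apply: visible_perm1 => j ij [_ /=].
by have := y_incr ij; rewrite ler_norml => ? /andP[? ?]; lra.
Qed.

Lemma left_side_visible i t : visible x y 1 i (side_pt (x i, y i) 3 t).
Proof.
(* [lra] ignores section hypotheses, hence the explicit [have := d_gt0]. *)
apply: visible_perm1 => j ij [/= + _].
by have := d_gt0; have := x_spread ij; rewrite ler_norml => ? ? /andP[? ?]; lra.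
Qed.

Lemma top_side_visible i t : t < d -> visible x y 1 i (side_pt (x i, y i) 2 t).
Proof.
move=> td; apply: visible_perm1 => j ij [/= + _].
by have := d_gt0; have := x_spread ij; rewrite ler_norml => ? ? /andP[? ?]; lra.
Qed.

Lemma visible_perimeter_ge i : ((2 + d / 2)%:E <= visible_perimeter x y 1 i)%E.
Proof.
pose side k := lebesgue_measure
  [set t : R | 0 <= t <= 1 /\ visible x y 1 i (side_pt (x i, y i) k t)].
have full_side k : (forall t, visible x y 1 i (side_pt (x i, y i) k t)) ->
    (1%:E <= side k)%E.
  move=> vis; rewrite -[1]subr0; apply: lebesgue_measure_ge_itv => [//|t t01].
  by split.
have top : ((d / 2)%:E <= side 2%N)%E.
  have d0 := d_gt0; have d1 := d_le1.
  rewrite -[d / 2]subr0; apply: lebesgue_measure_ge_itv; first lra.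
  move=> t; rewrite /= in_itv /= => /andP[t0 td].
  split; first by apply/andP; split; lra.
  by apply: top_side_visible; lra.
rewrite /visible_perimeter !big_ord_recr big_ord0 /= add0e.
apply: le_trans (_ : (1%:E + 0%:E + (d / 2)%:E + 1%:E <= _)%E).
  by rewrite -!EFinD lee_fin; lra.
apply: leeD; first apply: leeD; first apply: leeD.
- by apply: (full_side 0%N) => t; apply: bottom_side_visible.
- exact: measure_ge0.
- exact: top.
- by apply: (full_side 3%N) => t; apply: left_side_visible.
Qed.

Lemma layout_gap_gt0 : (0 < layout_gap x y 1)%E.
Proof.
apply: lt_bigmin => // i _; rewrite /sq_gap sube_gt0.
by apply: lt_le_trans (visible_perimeter_ge i); rewrite lte_fin ltrDl divr_gt0.
Qed.

End IncreasingStaircase.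

Definition stair_x (R : realType) n (d : R) (i : 'I_n) : R := 2^-1 + d * i%:R.

Lemma stair_x_spread (R : realType) n (d : R) (i j : 'I_n) :
  0 <= d -> (i < j)%N -> stair_x d i + d <= stair_x d j.
Proof.
move=> d_ge0 ij; rewrite /stair_x -addrA lerD2l -[X in _ + X]mulr1 -mulrDr.
by rewrite ler_wpM2l // natr1 ler_nat.
Qed.

Lemma stair_x_incr (R : realType) n (d : R) (i j : 'I_n) :
  0 <= d -> (i <= j)%N -> stair_x d i <= stair_x d j.
Proof. by move=> d_ge0 ij; rewrite /stair_x lerD2l ler_wpM2l // ler_nat. Qed.

Lemma stair_x_layout (R : realType) n (w d : R) :
  0 <= d -> d * n%:R <= w - 1 -> is_layout w (stair_x d : 'I_n -> R).
Proof.
move=> d_ge0 dn i; rewrite /stair_x lerDl mulr_ge0 ?ler0n //=.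
have : d * i%:R <= d * n%:R by rewrite ler_wpM2l // ler_nat ltnW.
lra.
Qed.

Theorem lemma1 (R : realType) (w h : R) (n : nat) (y : 'I_n -> R) :
  1 < w -> w <= 2 -> 1 < h ->
  (forall i j : 'I_n, (i < j)%N -> y i < y j) ->
  (forall i : 'I_n, 2^-1 <= y i <= h - 2^-1) ->
  exists (x : 'I_n -> R) (sigma : {perm 'I_n}),
    is_layout w x /\ staircase x sigma /\ (0 < layout_gap x y sigma)%E.
Proof.
move=> w_gt1 w_le2 _ y_incr _.
set d := (w - 1) / (n%:R + 1).
have n1_gt0 : 0 < n%:R + 1 :> R by rewrite ltr_pwDr // ler0n.
have d_gt0 : 0 < d by rewrite divr_gt0 // subr_gt0.
have dn_ge0 : 0 <= d * n%:R by rewrite mulr_ge0 // ltW.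
have d_n1 : d * (n%:R + 1) = w - 1 by rewrite divfK // gt_eqF.
exists (stair_x d), 1%g; split; [|split].
- apply: stair_x_layout; lra.
- by apply: staircase_perm1 => i j; apply: stair_x_incr; exact: ltW.
- apply: (layout_gap_gt0 y_incr _ d_gt0); last lra.
  by move=> i j; apply: stair_x_spread; exact: ltW.
Qed.
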